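(* Let $P$ and $Q$ be ultra-parallel planes in $\mathbb{H}^4$. Then $H_PH_Q$ is a hyperbolic isometry.
   Context: A plane is a $2$-dimensional totally geodesic subspace of $\mathbb{H}^4$. Two planes are ultra-parallel if their closures in $\mathbb{H}^4\cup\partial\mathbb{H}^4$ are disjoint. For a plane $P$, the half-turn $H_P$ is the composition of reflections in two orthogonal hyperplanes intersecting in $P$; it is the orientation preserving involution with fixed set $P$. *)

From HB Require Import structures.
From mathcomp Require Import all_boot all_order all_algebra.
From mathcomp Require Import reals.
Set Implicit Arguments. Unset Strict Implicit. Unset Printing Implicit Defensive.
Import Order.TTheory GRing.Theory Num.Theory.
Local Open Scope ring_scope.

(* Hyperboloid model of H^4 in Minkowski space R^{4,1} = 'rV[R]_5,
   coordinate 0 is the time coordinate. *)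
Section Hyp.
Variable R : realType.
Notation V := 'rV[R]_5.

Definition coord (x : V) (i : 'I_5) : R := x ord0 i.

Definition mink (x y : V) : R :=
  \sum_(i < 5) (if i == ord0 then -1 else 1) * coord x i * coord y i.

Definition Hyp (x : V) : Prop := mink x x = -1 /\ 0 < coord x ord0.

(* points of the ideal boundary dH^4 : future null rays, each represented
   by its unique vector with time coordinate 1 *)
Definition Ideal (v : V) : Prop := mink v v = 0 /\ coord v ord0 = 1.

(* Klein-model coordinates of a point of H^4 u dH^4 (ideal points are fixed) *)
Definition klein (x : V) : V := (coord x ord0)^-1 *: x.

(* closure of S (a subset of H^4) in the compactification H^4 u dH^4,
   computed in the Klein (closed ball) model *)
Definition hclosure (S : V -> Prop) (p : V) : Prop :=
  (Hyp p \/ Ideal p) /\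
  forall eps : R, 0 < eps ->
    exists x, S x /\ forall i : 'I_5, `|coord (klein x) i - coord (klein p) i| < eps.

(* a plane: intersection of H^4 with a 3-dimensional linear subspace
   meeting H^4 (a 2-dim totally geodesic subspace) *)
Definition is_plane (P : V -> Prop) : Prop :=
  exists W : 'M[R]_(3, 5), \rank W = 3%N /\
    (forall x, P x <-> (Hyp x /\ (x <= W)%MS)) /\ exists x, P x.

Definition ultra_parallel (P Q : V -> Prop) : Prop :=
  forall p, ~ (hclosure P p /\ hclosure Q p).

Definition spacelike (n : V) : Prop := 0 < mink n n.
Definition hyperplane (n : V) (x : V) : Prop := Hyp x /\ mink x n = 0.

Definition refl (n : V) (x : V) : V := x - (2 * mink x n / mink n n) *: n.

Definition half_turn (P : V -> Prop) (f : V -> V) : Prop :=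
  exists n1 n2 : V, spacelike n1 /\ spacelike n2 /\ mink n1 n2 = 0 /\
    (forall x, P x <-> (hyperplane n1 x /\ hyperplane n2 x)) /\
    (forall x, f x = refl n1 (refl n2 x)).

Definition fixes_ideal (f : V -> V) (v : V) : Prop :=
  exists c : R, 0 < c /\ f v = c *: v.

Definition hyperbolic_isom (f : V -> V) : Prop :=
  (forall x, Hyp x -> f x <> x) /\
  exists u v, Ideal u /\ Ideal v /\ u <> v /\ fixes_ideal f u /\ fixes_ideal f v /\
    forall w, Ideal w -> fixes_ideal f w -> w = u \/ w = v.
End Hyp.

From Pilot Require Import Defs.
From HB Require Import structures.
From mathcomp Require Import all_boot all_order all_algebra.
From mathcomp Require Import reals ring lra.
From mathcomp Require boolp.
Import Order.TTheory GRing.Theory Num.Theory.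
Set Implicit Arguments. Unset Strict Implicit. Unset Printing Implicit Defensive.
Local Open Scope ring_scope.

(* A half-turn H with fixed plane H^4 /\ E^perp (E spacelike of dimension 2)
   acts as -1 on E and as the identity on E^perp. For ultra-parallel planes the
   orthogonal complement of E + F contains no timelike or null vector, since
   such a vector would give a common point or a common ideal point.
   So H_P H_Q has no fixed point: a fixed point x would have the same
   projection onto E and F, and x minus this projection would be a timelike
   vector orthogonal to E + F. The same argument shows that the Gram matrix S
   of the projections onto E of an orthonormal basis of F has an eigenvalue
   l > 1. For an eigenvector u in F with projection w onto E, the plane
   spanned by u and w is invariant and timelike, and H_P H_Q acts on it with
   eigenvalues 2l - 1 -+ 2 sqrt (l (l - 1)) > 0 along two null lines; a
   Lorentz transformation with such an axis fixes exactly its two ideal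
   points. *)

Section Minkowski.
Variable R : realType.
Local Notation V := 'rV[R]_5.
Local Notation "x ^^ i" := (x ord0 i) (at level 8).
Implicit Types (x y z t h p e : V) (a s : R) (i : 'I_5).

Definition o1 : 'I_5 := @Ordinal 5 1 isT.
Definition o2 : 'I_5 := @Ordinal 5 2 isT.
Definition o3 : 'I_5 := @Ordinal 5 3 isT.
Definition o4 : 'I_5 := @Ordinal 5 4 isT.

Lemma minkE x y : mink x y = - (x^^ord0 * y^^ord0) + x^^o1 * y^^o1
  + x^^o2 * y^^o2 + x^^o3 * y^^o3 + x^^o4 * y^^o4.
Proof.
rewrite /mink !big_ord_recl big_ord0 /= /Defs.coord.
have -> : lift ord0 (lift ord0 (lift ord0 (lift ord0 (ord0 : 'I_1)))) = o4.
  exact: val_inj.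
have -> : lift ord0 (lift ord0 (lift ord0 (ord0 : 'I_2))) = o3 by exact: val_inj.
have -> : lift ord0 (lift ord0 (ord0 : 'I_3)) = o2 by exact: val_inj.
have -> : lift ord0 (ord0 : 'I_4) = o1 by exact: val_inj.
ring.
Qed.

Lemma row5P x y : x^^ord0 = y^^ord0 -> x^^o1 = y^^o1 -> x^^o2 = y^^o2 ->
  x^^o3 = y^^o3 -> x^^o4 = y^^o4 -> x = y.
Proof.
move=> h0 h1 h2 h3 h4; apply/rowP => -[[|[|[|[|[|//]]]]] Hi].
- by rewrite (_ : Ordinal Hi = ord0); last exact: val_inj.
- by rewrite (_ : Ordinal Hi = o1); last exact: val_inj.
- by rewrite (_ : Ordinal Hi = o2); last exact: val_inj.
- by rewrite (_ : Ordinal Hi = o3); last exact: val_inj.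
- by rewrite (_ : Ordinal Hi = o4); last exact: val_inj.
Qed.

Lemma minkC x y : mink x y = mink y x.
Proof. rewrite !minkE; ring. Qed.
Lemma minkDl x y z : mink (x + y) z = mink x z + mink y z.
Proof. rewrite !minkE !mxE; ring. Qed.
Lemma minkDr x y z : mink z (x + y) = mink z x + mink z y.
Proof. by rewrite minkC minkDl !(minkC z). Qed.
Lemma minkZl a x z : mink (a *: x) z = a * mink x z.
Proof. rewrite !minkE !mxE; ring. Qed.
Lemma minkZr a x z : mink z (a *: x) = a * mink z x.
Proof. by rewrite minkC minkZl minkC. Qed.
Lemma minkNl x z : mink (- x) z = - mink x z.
Proof. by rewrite -scaleN1r minkZl mulN1r. Qed.
Lemma minkNr x z : mink z (- x) = - mink z x.
Proof. by rewrite minkC minkNl minkC. Qed.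
Lemma minkBl x y z : mink (x - y) z = mink x z - mink y z.
Proof. by rewrite minkDl minkNl. Qed.
Lemma minkBr x y z : mink z (x - y) = mink z x - mink z y.
Proof. by rewrite minkDr minkNr. Qed.
Lemma mink0l z : mink 0 z = 0.
Proof. by rewrite -(scale0r 0) minkZl mul0r. Qed.
Lemma mink0r z : mink z 0 = 0.
Proof. by rewrite minkC mink0l. Qed.

Definition mink_lin :=
  (minkDl, minkDr, minkZl, minkZr, minkNl, minkNr, minkBl, minkBr, mink0l, mink0r).

Lemma time0_eq0 x : mink x x <= 0 -> x^^ord0 = 0 -> x = 0.
Proof.
rewrite minkE => xx x0; rewrite x0 in xx.
have sq0 (r : R) : r * r <= 0 -> r = 0.
  by move=> r2; apply/eqP; rewrite -sqrf_eq0 eq_le sqr_ge0 andbT expr2.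
by apply: row5P; rewrite ?mxE //; apply: sq0; nra.
Qed.

Lemma time_neq0 x : mink x x <= 0 -> x != 0 -> x^^ord0 != 0.
Proof. by move=> xx; apply: contra => /eqP/(time0_eq0 xx)/eqP. Qed.

(* With [Q] the squared spatial norm of [r], Cauchy-Schwarz on the spatial
   parts gives [t0^2 * mink r r >= - mink t t * Q]. *)
Lemma orth_timelike t r : mink t t < 0 -> mink r t = 0 ->
  0 <= mink r r /\ (mink r r = 0 -> r = 0).
Proof.
move=> tt rt.
have t0 : 0 < t^^ord0 ^+ 2.
  rewrite exprn_even_gt0 //; apply: time_neq0; first exact: ltW.
  by apply: contraTneq tt => ->; rewrite mink0l ltxx.
set Q := r^^o1 ^+ 2 + r^^o2 ^+ 2 + r^^o3 ^+ 2 + r^^o4 ^+ 2.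
have Q0 : 0 <= Q by rewrite /Q; nra.
have rr : mink r r = Q - r^^ord0 ^+ 2 by rewrite minkE /Q; ring.
have tr : t^^ord0 * r^^ord0 =
    t^^o1 * r^^o1 + t^^o2 * r^^o2 + t^^o3 * r^^o3 + t^^o4 * r^^o4.
  by move: rt; rewrite minkE; lra.
have key : - mink t t * Q <= t^^ord0 ^+ 2 * mink r r.
  have -> : t^^ord0 ^+ 2 * mink r r = t^^ord0 ^+ 2 * Q - (t^^ord0 * r^^ord0) ^+ 2.
    by rewrite rr; ring.
  rewrite tr -subr_ge0.
  have -> : t^^ord0 ^+ 2 * Q - (t^^o1 * r^^o1 + t^^o2 * r^^o2 + t^^o3 * r^^o3
      + t^^o4 * r^^o4) ^+ 2 - - mink t t * Q =
    (t^^o1 * r^^o2 - t^^o2 * r^^o1) ^+ 2 + (t^^o1 * r^^o3 - t^^o3 * r^^o1) ^+ 2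
    + (t^^o1 * r^^o4 - t^^o4 * r^^o1) ^+ 2 + (t^^o2 * r^^o3 - t^^o3 * r^^o2) ^+ 2
    + (t^^o2 * r^^o4 - t^^o4 * r^^o2) ^+ 2 + (t^^o3 * r^^o4 - t^^o4 * r^^o3) ^+ 2.
    by rewrite minkE /Q; ring.
  by rewrite !addr_ge0 ?sqr_ge0.
have rr0 : 0 <= mink r r.
  by rewrite -(pmulr_rge0 _ t0); apply: le_trans key; nra.
split=> // rrz; apply: time0_eq0; first by rewrite rrz.
have Qz : Q = 0 by move: key; rewrite rrz mulr0; nra.
have : r^^ord0 ^+ 2 = 0 by lra.
by move/eqP; rewrite sqrf_eq0 => /eqP.
Qed.

Definition proj e1 e2 x : V := mink x e1 *: e1 + mink x e2 *: e2.
Definition halfturn e1 e2 x : V := x - 2 *: proj e1 e2 x.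

Lemma projD e1 e2 x y : proj e1 e2 (x + y) = proj e1 e2 x + proj e1 e2 y.
Proof. by rewrite /proj !minkDl !scalerDl addrACA. Qed.
Lemma projZ e1 e2 a x : proj e1 e2 (a *: x) = a *: proj e1 e2 x.
Proof. by rewrite /proj !minkZl scalerDr !scalerA. Qed.
Lemma halfturnD e1 e2 x y :
  halfturn e1 e2 (x + y) = halfturn e1 e2 x + halfturn e1 e2 y.
Proof. by rewrite /halfturn projD scalerDr opprD addrACA. Qed.
Lemma halfturnZ e1 e2 a x : halfturn e1 e2 (a *: x) = a *: halfturn e1 e2 x.
Proof. by rewrite /halfturn projZ scalerBr !scalerA mulrC. Qed.
Lemma halfturnB e1 e2 x y :
  halfturn e1 e2 (x - y) = halfturn e1 e2 x - halfturn e1 e2 y.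
Proof. by rewrite halfturnD -scaleN1r halfturnZ scaleN1r. Qed.

Lemma halfturn_fixed_proj e1 e2 x : proj e1 e2 x = x -> halfturn e1 e2 x = - x.
Proof. by move=> px; rewrite /halfturn px scaler_nat mulr2n opprD addrA subrr add0r. Qed.

Lemma halfturn_eq_proj e1 e2 (f1 f2 : V) x :
  halfturn e1 e2 x = halfturn f1 f2 x -> proj e1 e2 x = proj f1 f2 x.
Proof. by move/addrI/oppr_inj; apply: scalerI; rewrite pnatr_eq0. Qed.

Lemma mink_projr e1 e2 x y :
  mink x (proj e1 e2 y) = mink y e1 * mink x e1 + mink y e2 * mink x e2.
Proof. by rewrite /proj !mink_lin. Qed.
Lemma mink_projl e1 e2 x y :
  mink (proj e1 e2 y) x = mink y e1 * mink x e1 + mink y e2 * mink x e2.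
Proof. by rewrite minkC mink_projr. Qed.

Definition orthonormal e1 e2 :=
  [/\ mink e1 e1 = 1, mink e2 e2 = 1 & mink e1 e2 = 0].

Section Orthonormal.
Variables e1 e2 : V.
Hypothesis on_e : orthonormal e1 e2.
Let e1e1 : mink e1 e1 = 1. Proof. by case: on_e. Qed.
Let e2e2 : mink e2 e2 = 1. Proof. by case: on_e. Qed.
Let e1e2 : mink e1 e2 = 0. Proof. by case: on_e. Qed.
Local Notation p := (proj e1 e2).

Lemma mink_proj_e1 x : mink (p x) e1 = mink x e1.
Proof. by rewrite mink_projl e1e1 e1e2; ring. Qed.
Lemma mink_proj_e2 x : mink (p x) e2 = mink x e2.
Proof. by rewrite mink_projl e2e2 (minkC e2 e1) e1e2; ring. Qed.
Lemma projK x : p (p x) = p x.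
Proof. by rewrite {1}/proj mink_proj_e1 mink_proj_e2. Qed.
Lemma mink_proj x y :
  mink (p x) (p y) = mink x e1 * mink y e1 + mink x e2 * mink y e2.
Proof. by rewrite mink_projr mink_proj_e1 mink_proj_e2; ring. Qed.
Lemma mink_proj_sym x y : mink (p x) y = mink (p x) (p y).
Proof. by rewrite mink_proj mink_projl; ring. Qed.

Lemma mink_perp_e1 x : mink (x - p x) e1 = 0.
Proof. by rewrite minkBl mink_proj_e1 subrr. Qed.
Lemma mink_perp_e2 x : mink (x - p x) e2 = 0.
Proof. by rewrite minkBl mink_proj_e2 subrr. Qed.
Lemma mink_perp x : mink (x - p x) (x - p x) = mink x x - mink (p x) (p x).
Proof. rewrite minkBl !minkBr mink_proj mink_projl mink_projr; ring. Qed.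

Lemma halfturnK x : halfturn e1 e2 (halfturn e1 e2 x) = x.
Proof.
have ph : p (halfturn e1 e2 x) = - p x.
  rewrite {1}/halfturn -scaleNr projD projZ projK scaleNr.
  by rewrite scaler_nat mulr2n opprD addrA subrr add0r.
by rewrite {1}/halfturn ph scalerN opprK /halfturn subrK.
Qed.

Lemma halfturn_iso x y : mink (halfturn e1 e2 x) (halfturn e1 e2 y) = mink x y.
Proof.
rewrite /halfturn !(minkBl, minkBr, minkZl, minkZr) mink_proj mink_projl mink_projr.
by rewrite (minkC y e1) (minkC y e2); ring.
Qed.
End Orthonormal.

Lemma half_turnP (P : V -> Prop) (f : V -> V) : half_turn P f -> exists e1 e2,
  [/\ orthonormal e1 e2,
   (forall x, P x <-> (Hyp x /\ mink x e1 = 0 /\ mink x e2 = 0)) &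
   (forall x, f x = halfturn e1 e2 x)].
Proof.
case=> n1 [n2 [sp1 [sp2 [n12 [hP hf]]]]].
set s1 := Num.sqrt (mink n1 n1); set s2 := Num.sqrt (mink n2 n2).
have s1n : s1 != 0 by rewrite gt_eqF ?sqrtr_gt0.
have s2n : s2 != 0 by rewrite gt_eqF ?sqrtr_gt0.
have n11 : mink n1 n1 = s1 ^+ 2 by rewrite sqr_sqrtr // ltW.
have n22 : mink n2 n2 = s2 ^+ 2 by rewrite sqr_sqrtr // ltW.
exists (s1^-1 *: n1), (s2^-1 *: n2); split; first split.
- by rewrite !mink_lin n11; field.
- by rewrite !mink_lin n22; field.
- by rewrite !mink_lin n12 !mulr0.
- move=> x; rewrite hP /hyperplane !minkZr.
  split; first by case=> -[hx ->] [_ ->]; rewrite !mulr0.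
  case=> hx [/eqP + /eqP]; rewrite !mulf_eq0 !invr_eq0 (negPf s1n) (negPf s2n).
  by move=> /eqP ? /eqP.
- move=> x; rewrite hf /refl /halfturn /proj !mink_lin (minkC n2 n1) n12 n11 n22.
  by apply/rowP => i; rewrite !mxE; field; rewrite s1n s2n.
Qed.

Definition to_hyp y : V := (Num.sg (y^^ord0) / Num.sqrt (- mink y y)) *: y.
Definition to_ideal x : V := (x^^ord0)^-1 *: x.

Lemma to_hypP y : mink y y < 0 -> Hyp (to_hyp y) /\ klein (to_hyp y) = klein y.
Proof.
move=> yy; have y0 : y^^ord0 != 0.
  by apply: time_neq0 (ltW yy) _; apply: contraTneq yy => ->; rewrite mink0l ltxx.
set q := Num.sqrt (- mink y y).
have q0 : 0 < q by rewrite sqrtr_gt0 oppr_gt0.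
have q2 : q ^+ 2 = - mink y y by rewrite sqr_sqrtr // oppr_ge0 ltW.
split; first split.
- rewrite /to_hyp minkZl minkZr mulrA -expr2 expr_div_n sqr_sg y0 q2.
  by rewrite (_ : true%:R = 1) // mul1r invrN mulNr mulVf ?lt_eqF.
- by rewrite /to_hyp /Defs.coord mxE mulrAC -normrEsg divr_gt0 ?normr_gt0.
- rewrite /klein /to_hyp /Defs.coord mxE scalerA invfM mulrAC mulVf ?mul1r //.
  by apply: mulf_neq0; rewrite ?invr_eq0 ?sgr_eq0 ?(gt_eqF q0).
Qed.

Lemma to_idealP x : mink x x = 0 -> x != 0 -> Ideal (to_ideal x).
Proof.
move=> xx x0; have t0 : x^^ord0 != 0 by rewrite time_neq0 ?xx.
split; first by rewrite /to_ideal minkZl minkZr xx !mulr0.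
by rewrite /to_ideal /Defs.coord mxE mulVf.
Qed.

Lemma hclosure_self (S : V -> Prop) z : S z -> Hyp z -> hclosure S z.
Proof.
move=> Sz Hz; split; first by left.
by move=> eps eps0; exists z; split=> // i; rewrite subrr normr0.
Qed.

Lemma far_shift (h0 k B : R) : 0 < h0 -> 0 < B ->
  exists s, s * k <= 0 /\ B <= `|h0 + s|.
Proof.
move=> h00 B0; have [k0|k0] := lerP k 0.
- by exists B; split; [nra | rewrite ger0_norm; lra].
- exists (- (h0 + B)); split; first nra.
  by rewrite opprD addrA subrr add0r normrN ger0_norm; lra.
Qed.

Lemma klein_shift h p s i : Ideal p -> h^^ord0 + s != 0 ->
  (klein (h + s *: p))^^i - (klein p)^^i = (h^^i - h^^ord0 * p^^i) / (h^^ord0 + s).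
Proof.
case=> _; rewrite /klein /Defs.coord !mxE => -> h0t.
by rewrite invr1 mul1r mulr1; field.
Qed.

(* Along [h + s p] with [|s|] large, the points of the plane through [h]
   converge in the Klein model to the ideal point [p]. *)
Lemma ideal_in_hclosure (S : V -> Prop) e1 e2 h p :
  (forall x, S x <-> (Hyp x /\ mink x e1 = 0 /\ mink x e2 = 0)) -> S h ->
  Ideal p -> mink p e1 = 0 -> mink p e2 = 0 -> hclosure S p.
Proof.
move=> hS Sh Ip pe1 pe2; have [[hh h0] [he1 he2]] := iffLR (hS h) Sh.
have [pp _] := Ip; split=> [|eps eps0]; first by right.
set M := \sum_(i < 5) `|h^^i - h^^ord0 * p^^i|.
have M0 : 0 <= M by rewrite sumr_ge0.
have B0 : 0 < (M + 1) / eps by rewrite divr_gt0 // ltr_wpDl.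
have [s [sk far]] := far_shift (mink h p) h0 B0.
have hs0 : 0 < `|h^^ord0 + s| := lt_le_trans B0 far.
have yy : mink (h + s *: p) (h + s *: p) < 0.
  by rewrite !mink_lin hh pp (minkC p h); nra.
have [Hy Ky] := to_hypP yy.
exists (to_hyp (h + s *: p)); split.
  have orth n : mink h n = 0 -> mink p n = 0 -> mink (to_hyp (h + s *: p)) n = 0.
    move=> hn pn; rewrite minkZl [mink (h + _) n]minkDl minkZl hn pn.
    by rewrite !mulr0 addr0 mulr0.
  by apply/hS; rewrite !orth.
move=> i; rewrite /Defs.coord Ky klein_shift -?normr_gt0 //.
rewrite normrM normfV ltr_pdivrMr //.
have di : `|h^^i - h^^ord0 * p^^i| <= M.
  by rewrite /M (bigD1 i) //= ler_wpDr ?sumr_ge0.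
have : M + 1 <= eps * `|h^^ord0 + s| by rewrite -ler_pdivrMl // mulrC.
lra.
Qed.

Lemma ultra_parallel_spacelike (P Q : V -> Prop) e1 e2 f1 f2 h h' :
  ultra_parallel P Q ->
  (forall x, P x <-> (Hyp x /\ mink x e1 = 0 /\ mink x e2 = 0)) ->
  (forall x, Q x <-> (Hyp x /\ mink x f1 = 0 /\ mink x f2 = 0)) ->
  P h -> Q h' ->
  forall v, mink v e1 = 0 -> mink v e2 = 0 -> mink v f1 = 0 -> mink v f2 = 0 ->
    mink v v <= 0 -> v = 0.
Proof.
move=> up hP hQ Ph Qh' v ve1 ve2 vf1 vf2 vv.
have [vlt|vge] := ltP (mink v v) 0.
  have [Hv _] := to_hypP vlt; have z (n : V) : mink v n = 0 -> mink (to_hyp v) n = 0.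
    by move=> vn; rewrite minkZl vn mulr0.
  by case: (up (to_hyp v)); split; apply: hclosure_self => //;
     [apply/hP | apply/hQ]; rewrite !z.
apply/eqP/contraT => v0; have v00 : mink v v = 0 by apply/eqP; rewrite eq_le vv.
have z (n : V) : mink v n = 0 -> mink (to_ideal v) n = 0.
  by move=> vn; rewrite minkZl vn mulr0.
have Ip := to_idealP v00 v0.
case: (up (to_ideal v)); split.
  exact: ideal_in_hclosure hP Ph Ip (z _ ve1) (z _ ve2).
exact: ideal_in_hclosure hQ Qh' Ip (z _ vf1) (z _ vf2).
Qed.

Lemma psd_sym2_range (k11 k12 k22 c1 c2 : R) :
  (forall b1 b2, 0 <= b1 * (k11 * b1 + k12 * b2) + b2 * (k12 * b1 + k22 * b2)) ->
  (forall w1 w2, k11 * w1 + k12 * w2 = 0 -> k12 * w1 + k22 * w2 = 0 ->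
     c1 * w1 + c2 * w2 = 0) ->
  exists b1 b2, k11 * b1 + k12 * b2 = c1 /\ k12 * b1 + k22 * b2 = c2.
Proof.
move=> psd ker.
have k11_ge0 : 0 <= k11 by have := psd 1 0; lra.
have k22_ge0 : 0 <= k22 by have := psd 0 1; lra.
have [D0|Dn] := eqVneq (k11 * k22 - k12 * k12) 0; last first.
  exists ((k22 * c1 - k12 * c2) / (k11 * k22 - k12 * k12)).
  exists ((k11 * c2 - k12 * c1) / (k11 * k22 - k12 * k12)).
  by split; field.
have [T0|Tn] := eqVneq (k11 + k22) 0.
  have k11_0 : k11 = 0 by lra.
  have k22_0 : k22 = 0 by lra.
  have k12_0 : k12 = 0 by apply/eqP; rewrite -sqrf_eq0; apply/eqP; nra.
  have c1_0 : c1 = 0 by have := ker 1 0; rewrite k11_0 k12_0 k22_0; lra.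
  have c2_0 : c2 = 0 by have := ker 0 1; rewrite k11_0 k12_0 k22_0; lra.
  by exists 0, 0; rewrite k11_0 k12_0 k22_0 c1_0 c2_0; split; ring.
(* rank one: the kernel is spanned by both (k22, -k12) and (-k12, k11) *)
have q1 : c1 * k22 + c2 * (- k12) = 0 by apply: ker; lra.
have q2 : c1 * (- k12) + c2 * k11 = 0 by apply: ker; lra.
exists (c1 / (k11 + k22)), (c2 / (k11 + k22)).
by split; apply: (mulIf Tn); rewrite mulrDl -!mulrA !mulVf //; lra.
Qed.

Lemma sym2_max_eigen (s11 s12 s22 : R) :
  let l := (s11 + s22) / 2 + Num.sqrt (((s11 - s22) / 2) ^+ 2 + s12 ^+ 2) in
  (forall b1 b2, b1 * (s11 * b1 + s12 * b2) + b2 * (s12 * b1 + s22 * b2)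
                   <= l * (b1 ^+ 2 + b2 ^+ 2)) /\
  exists g1 g2, [/\ 0 < g1 ^+ 2 + g2 ^+ 2,
    s11 * g1 + s12 * g2 = l * g1 & s12 * g1 + s22 * g2 = l * g2].
Proof.
move=> l; set d := (s11 - s22) / 2; set q := Num.sqrt (d ^+ 2 + s12 ^+ 2).
have q0 : 0 <= q by rewrite sqrtr_ge0.
have q2 : q ^+ 2 = d ^+ 2 + s12 ^+ 2 by rewrite sqr_sqrtr // addr_ge0 ?sqr_ge0.
have l1 : l = s11 - d + q by rewrite /l -/d -/q /d; field.
have l2 : l = s22 + d + q by rewrite /l -/d -/q /d; field.
have qdm : 0 <= q - d by nra.
have qdp : 0 <= q + d by nra.
have qq : (q - d) * (q + d) = s12 ^+ 2 by nra.
split=> [b1 b2|].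
  rewrite -subr_ge0.
  have -> : l * (b1 ^+ 2 + b2 ^+ 2)
        - (b1 * (s11 * b1 + s12 * b2) + b2 * (s12 * b1 + s22 * b2))
      = (q - d) * b1 ^+ 2 - 2 * s12 * b1 * b2 + (q + d) * b2 ^+ 2.
    by rewrite l1 (_ : s22 = s11 - 2 * d); [ring | rewrite /d; field].
  have [qd0|qdn] := eqVneq (q - d) 0.
    have s12_0 : s12 = 0 by apply/eqP; rewrite -sqrf_eq0 -qq qd0 mul0r.
    by rewrite qd0 s12_0; nra.
  have qd_gt0 : 0 < q - d by rewrite lt_def qdn.
  rewrite -(pmulr_rge0 _ qd_gt0).
  have -> : (q - d) * ((q - d) * b1 ^+ 2 - 2 * s12 * b1 * b2 + (q + d) * b2 ^+ 2)
      = ((q - d) * b1 - s12 * b2) ^+ 2 + ((q - d) * (q + d) - s12 ^+ 2) * b2 ^+ 2.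
    by ring.
  by rewrite qq subrr mul0r addr0 sqr_ge0.
have [/andP[/eqP s12_0 /eqP qd0]|hn] := boolP ((s12 == 0) && (q - d == 0)).
  by exists 1, 0; split; rewrite ?l1 ?s12_0; nra.
exists s12, (q - d); split; last by rewrite l2; nra.
  move: hn; rewrite negb_and => /orP[] hn.
    have : 0 < s12 ^+ 2 by rewrite exprn_even_gt0.
    nra.
  have : 0 < (q - d) ^+ 2 by rewrite exprn_even_gt0.
  nra.
by rewrite l1; ring.
Qed.

Definition axis (T : V -> V) x1 x2 (c1 c2 : R) :=
  [/\ mink x1 x1 = 0, mink x2 x2 = 0 & mink x1 x2 < 0] /\
  [/\ T x1 = c1 *: x1, T x2 = c2 *: x2, c1 * c2 = 1, 0 < c1 & c1 != 1].

Section Axis.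
Variable T : V -> V.
Hypothesis TD : forall x y, T (x + y) = T x + T y.
Hypothesis TZ : forall a x, T (a *: x) = a *: T x.
Hypothesis Tiso : forall x y, mink (T x) (T y) = mink x y.

Lemma eigen_orth x y (c d : R) :
  T x = c *: x -> T y = d *: y -> c * d != 1 -> mink x y = 0.
Proof.
move=> Tx Ty cd; have := Tiso x y; rewrite Tx Ty minkZl minkZr mulrA => e.
have : (c * d - 1) * mink x y = 0 by rewrite mulrBl e mul1r subrr.
by move/eqP; rewrite mulf_eq0 subr_eq0 (negPf cd) => /eqP.
Qed.

Lemma axis_sym x1 x2 c1 c2 : axis T x1 x2 c1 c2 -> axis T x2 x1 c2 c1.
Proof.
case=> -[x11 x22 x12] [Tx1 Tx2 c12 c1_gt0 c1_neq1].
have c2_gt0 : 0 < c2 by rewrite -(pmulr_rgt0 _ c1_gt0) c12.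
split; split; rewrite 1?minkC 1?mulrC //.
by apply: contra_neq c1_neq1 => c21; rewrite -[c1]mulr1 -c21 c12.
Qed.

Lemma axis_timelike x1 x2 : mink x1 x1 = 0 -> mink x2 x2 = 0 -> mink x1 x2 < 0 ->
  mink (x1 + x2) (x1 + x2) < 0.
Proof. by move=> x11 x22 x12; rewrite !mink_lin x11 x22 (minkC x2 x1); lra. Qed.

(* Pairing with [x2] forces the eigenvalue of [W] to be [c1]; then
   [W - a x1] is a [c1]-eigenvector, hence null, and orthogonal to the
   timelike [x1 + x2], hence zero. *)
Lemma axis_fixed_ideal1 x1 x2 c1 c2 W c : axis T x1 x2 c1 c2 ->
  Ideal W -> T W = c *: W -> 0 < c -> mink W x2 != 0 -> W = to_ideal x1.
Proof.
case=> -[x11 x22 x12] [Tx1 Tx2 c12 c1_gt0 c1_neq1] [WW W0] TW c_gt0 Wx2.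
have c1c1 : c1 * c1 != 1.
  apply: contra_neq c1_neq1 => c11.
  have : (c1 - 1) * (c1 + 1) == 0.
    by apply/eqP; rewrite (_ : _ * _ = c1 * c1 - 1); [rewrite c11 subrr | ring].
  by rewrite mulf_eq0 subr_eq0 => /orP[/eqP // | /eqP]; lra.
have cc1 : c = c1.
  have cc2 : c * c2 = 1.
    by apply/eqP; apply: contraNT Wx2 => ccn; rewrite (eigen_orth TW Tx2 ccn) eqxx.
  by rewrite -[c]mulr1 -c12 mulrCA cc2 mulr1.
have Wx1 : mink W x1 = 0 by apply: eigen_orth TW Tx1 _; rewrite cc1.
set a := mink W x2 / mink x1 x2; set r := W - a *: x1.
have rx1 : mink r x1 = 0 by rewrite /r minkBl minkZl Wx1 x11 mulr0 subrr.
have rx2 : mink r x2 = 0 by rewrite /r minkBl minkZl /a mulfVK ?lt_eqF ?subrr.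
have Tr : T r = c1 *: r.
  rewrite /r -scaleNr TD TZ TW Tx1 cc1.
  by rewrite scalerA (mulrC (- a)) -scalerA -scalerDr scaleNr.
have rr : mink r r = 0 := eigen_orth Tr Tr c1c1.
have rt : mink r (x1 + x2) = 0 by rewrite minkDr rx1 rx2 addr0.
have r0 : r = 0 := (orth_timelike (axis_timelike x11 x22 x12) rt).2 rr.
have Wa : W = a *: x1 by apply/eqP; rewrite -subr_eq0 -/r r0.
have ax : a * x1^^ord0 = 1 by rewrite -W0 Wa /Defs.coord mxE.
have x10 : x1^^ord0 != 0.
  by apply/eqP => x0; move: ax; rewrite x0 mulr0 => /eqP; rewrite eq_sym oner_eq0.
by rewrite Wa /to_ideal; congr (_ *: _); apply: (mulIf x10); rewrite ax mulVf.
Qed.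

Lemma axis_fixed_ideal x1 x2 c1 c2 W c : axis T x1 x2 c1 c2 ->
  Ideal W -> T W = c *: W -> 0 < c -> W = to_ideal x1 \/ W = to_ideal x2.
Proof.
move=> ax IW TW c_gt0.
have [Wx2|Wx2] := eqVneq (mink W x2) 0; last first.
  by left; exact: axis_fixed_ideal1 ax IW TW c_gt0 Wx2.
have [Wx1|Wx1] := eqVneq (mink W x1) 0; last first.
  by right; exact: axis_fixed_ideal1 (axis_sym ax) IW TW c_gt0 Wx1.
have [[x11 x22 x12] _] := ax; have [WW W0] := IW.
have Wt : mink W (x1 + x2) = 0 by rewrite minkDr Wx1 Wx2 addr0.
have W00 : W = 0 := (orth_timelike (axis_timelike x11 x22 x12) Wt).2 WW.
by move: W0; rewrite W00 /Defs.coord mxE => /eqP; rewrite eq_sym oner_eq0.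
Qed.

Lemma fixes_ideal_axis x c : T x = c *: x -> 0 < c -> fixes_ideal T (to_ideal x).
Proof. by move=> Tx c_gt0; exists c; rewrite /to_ideal TZ Tx !scalerA mulrC. Qed.

Lemma hyperbolic_of_axis x1 x2 c1 c2 : (forall x, Hyp x -> T x <> x) ->
  axis T x1 x2 c1 c2 -> hyperbolic_isom T.
Proof.
move=> nofix ax; split=> //; have [[x11 x22 x12] [Tx1 Tx2 _ c1_gt0 _]] := ax.
have [_ [_ _ _ c2_gt0 _]] := axis_sym ax.
have x1n : x1 != 0 by apply: contraTneq x12 => ->; rewrite mink0l ltxx.
have x2n : x2 != 0 by apply: contraTneq x12 => ->; rewrite mink0r ltxx.
exists (to_ideal x1), (to_ideal x2); split; first exact: to_idealP.
split; first exact: to_idealP.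
split.
  move=> e; have [+ _] := to_idealP x22 x2n; rewrite -{1}e /to_ideal minkZl minkZr.
  have t1 : x1^^ord0 != 0 by rewrite time_neq0 ?x11.
  have t2 : x2^^ord0 != 0 by rewrite time_neq0 ?x22.
  by apply/eqP; rewrite !mulf_neq0 ?invr_eq0 // lt_eqF.
split; first exact: fixes_ideal_axis Tx1 c1_gt0.
split; first exact: fixes_ideal_axis Tx2 c2_gt0.
by move=> W IW [c [c_gt0 TW]]; apply: axis_fixed_ideal ax IW TW c_gt0.
Qed.

(* On the invariant plane spanned by [u] and [w] the eigenvalues of [T] are
   [2l - 1 -+ 2 sqrt (l (l - 1))], with null eigenvectors [u + mu w]. *)
Lemma axis_of_plane u w (a l : R) : 0 < a -> 1 < l ->
  mink u u = a -> mink u w = l * a -> mink w w = l * a ->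
  T u = 2 *: w - u -> T w = (4 * l - 1) *: w - (2 * l) *: u ->
  exists x1 x2 c1 c2, axis T x1 x2 c1 c2.
Proof.
move=> a_gt0 l_gt1 uu uw ww Tu Tw.
have eigen mu : l * mu ^+ 2 + 2 * l * mu + 1 = 0 ->
    T (u + mu *: w) = (-1 - 2 * l * mu) *: (u + mu *: w).
  move=> hmu; rewrite TD TZ Tu Tw; apply/rowP => i; rewrite !mxE.
  by apply/eqP; rewrite -subr_eq0; apply/eqP;
     rewrite -[RHS](mulr0 (2 * w ord0 i)) -hmu; ring.
have null mu : l * mu ^+ 2 + 2 * l * mu + 1 = 0 ->
    mink (u + mu *: w) (u + mu *: w) = 0.
  move=> hmu; rewrite !mink_lin uu uw ww (minkC w u) uw.
  by rewrite -[RHS](mulr0 a) -hmu; ring.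
have l0 : l != 0 by rewrite gt_eqF //; lra.
set rho := Num.sqrt (l * (l - 1)).
have rho_gt0 : 0 < rho by rewrite sqrtr_gt0; nra.
have rho2 : rho ^+ 2 = l * (l - 1) by rewrite sqr_sqrtr //; nra.
have root1 : l * (-1 + rho / l) ^+ 2 + 2 * l * (-1 + rho / l) + 1 = 0.
  rewrite (_ : _ + 1 = rho ^+ 2 / l - l + 1); last by field.
  by rewrite rho2; field.
have root2 : l * (-1 + - rho / l) ^+ 2 + 2 * l * (-1 + - rho / l) + 1 = 0.
  rewrite (_ : _ + 1 = rho ^+ 2 / l - l + 1); last by field.
  by rewrite rho2; field.
exists (u + (-1 + rho / l) *: w), (u + (-1 + - rho / l) *: w).
exists (2 * l - 1 - 2 * rho), (2 * l - 1 + 2 * rho).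
have c2_gt0 : 0 < 2 * l - 1 + 2 * rho by lra.
have c12 : (2 * l - 1 - 2 * rho) * (2 * l - 1 + 2 * rho) = 1.
  rewrite (_ : _ * _ = (2 * l - 1) ^+ 2 - 4 * rho ^+ 2); last by ring.
  by rewrite rho2; ring.
split; split.
- exact: null.
- exact: null.
- rewrite !mink_lin uu uw ww (minkC w u) uw.
  rewrite (_ : _ + _ = a * (1 - 2 * l + (l - rho ^+ 2 / l))); last by field.
  by rewrite rho2 (mulrC l) mulfK //; nra.
- by rewrite eigen //; congr (_ *: _); field.
- by rewrite eigen //; congr (_ *: _); field.
- exact: c12.
- by rewrite -(pmulr_lgt0 _ c2_gt0) c12.
- by apply/eqP => c1_1; move: c12; rewrite c1_1 mul1r; lra.
Qed.

End Axis.

Definition halfturn_comp e1 e2 f1 f2 x : V := halfturn e1 e2 (halfturn f1 f2 x).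

Section TwoPlanes.
Variables e1 e2 f1 f2 h : V.
Hypothesis on_e : orthonormal e1 e2.
Hypothesis on_f : orthonormal f1 f2.
Hypothesis hh : mink h h = -1.
Hypothesis he1 : mink h e1 = 0.
Hypothesis he2 : mink h e2 = 0.
Hypothesis ultra : forall v, mink v e1 = 0 -> mink v e2 = 0 -> mink v f1 = 0 ->
  mink v f2 = 0 -> mink v v <= 0 -> v = 0.
Local Notation pE := (proj e1 e2).
Local Notation pF := (proj f1 f2).
Local Notation T := (halfturn_comp e1 e2 f1 f2).

Lemma halfturn_compD x y : T (x + y) = T x + T y.
Proof. by rewrite /halfturn_comp !halfturnD. Qed.
Lemma halfturn_compZ a x : T (a *: x) = a *: T x.
Proof. by rewrite /halfturn_comp !halfturnZ. Qed.
Lemma halfturn_comp_iso x y : mink (T x) (T y) = mink x y.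
Proof. by rewrite /halfturn_comp !halfturn_iso. Qed.

Lemma halfturn_comp_no_fixpoint x : Hyp x -> T x <> x.
Proof.
case=> xx _ Tx.
have pEF : pE x = pF x.
  by apply: halfturn_eq_proj; rewrite -{1}Tx /halfturn_comp halfturnK.
have : x - pE x = 0.
  apply: ultra.
  - exact: mink_perp_e1.
  - exact: mink_perp_e2.
  - by rewrite pEF mink_perp_e1.
  - by rewrite pEF mink_perp_e2.
  - by rewrite mink_perp // mink_proj // xx; nra.
move/eqP; rewrite subr_eq0 => /eqP xp.
by move: xx; rewrite xp mink_proj //; nra.
Qed.

Let f1f1 : mink f1 f1 = 1. Proof. by case: on_f. Qed.
Let f2f2 : mink f2 f2 = 1. Proof. by case: on_f. Qed.
Let f1f2 : mink f1 f2 = 0. Proof. by case: on_f. Qed.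

Definition fvec (b1 b2 : R) : V := b1 *: f1 + b2 *: f2.
Definition fperp (b1 b2 : R) : V := fvec b1 b2 - pE (fvec b1 b2).

Let s11 := mink (pE f1) (pE f1).
Let s12 := mink (pE f1) (pE f2).
Let s22 := mink (pE f2) (pE f2).

Lemma mink_fvec_f1 b1 b2 : mink (fvec b1 b2) f1 = b1.
Proof. by rewrite /fvec !mink_lin f1f1 (minkC f2) f1f2; ring. Qed.
Lemma mink_fvec_f2 b1 b2 : mink (fvec b1 b2) f2 = b2.
Proof. by rewrite /fvec !mink_lin f2f2 f1f2; ring. Qed.
Lemma mink_fvec b1 b2 : mink (fvec b1 b2) (fvec b1 b2) = b1 ^+ 2 + b2 ^+ 2.
Proof. by rewrite {2}/fvec minkDr !minkZr mink_fvec_f1 mink_fvec_f2; ring. Qed.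

Lemma mink_projE_fvec_f1 b1 b2 : mink (pE (fvec b1 b2)) f1 = s11 * b1 + s12 * b2.
Proof.
rewrite mink_proj_sym // /fvec projD !projZ minkDl !minkZl (minkC (pE f2)).
by rewrite mulrC (mulrC s12).
Qed.
Lemma mink_projE_fvec_f2 b1 b2 : mink (pE (fvec b1 b2)) f2 = s12 * b1 + s22 * b2.
Proof.
by rewrite mink_proj_sym // /fvec projD !projZ minkDl !minkZl mulrC (mulrC s22).
Qed.
Lemma mink_projE_fvec b1 b2 : mink (pE (fvec b1 b2)) (pE (fvec b1 b2)) =
  b1 * (s11 * b1 + s12 * b2) + b2 * (s12 * b1 + s22 * b2).
Proof.
rewrite -mink_proj_sym // {2}/fvec minkDr !minkZr.
by rewrite mink_projE_fvec_f1 mink_projE_fvec_f2.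
Qed.

Lemma mink_fperp_f1 b1 b2 : mink (fperp b1 b2) f1 = (1 - s11) * b1 + (- s12) * b2.
Proof. by rewrite minkBl mink_fvec_f1 mink_projE_fvec_f1; ring. Qed.
Lemma mink_fperp_f2 b1 b2 : mink (fperp b1 b2) f2 = (- s12) * b1 + (1 - s22) * b2.
Proof. by rewrite minkBl mink_fvec_f2 mink_projE_fvec_f2; ring. Qed.
Lemma mink_fperp b1 b2 : mink (fperp b1 b2) (fperp b1 b2) =
  b1 * ((1 - s11) * b1 + (- s12) * b2) + b2 * ((- s12) * b1 + (1 - s22) * b2).
Proof. by rewrite mink_perp // mink_fvec mink_projE_fvec; ring. Qed.
Lemma mink_h_fperp b1 b2 : mink h (fperp b1 b2) = mink h f1 * b1 + mink h f2 * b2.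
Proof.
rewrite minkBr mink_projr he1 he2 !mulr0 addr0 subr0.
by rewrite /fvec !mink_lin; ring.
Qed.

(* If all eigenvalues of [S] are at most 1, then [h] minus a suitable
   [fperp b1 b2] is a non-spacelike vector orthogonal to both planes. *)
Lemma gram_eigen_gt1 : exists l g1 g2, 1 < l /\
  [/\ 0 < g1 ^+ 2 + g2 ^+ 2, s11 * g1 + s12 * g2 = l * g1 & s12 * g1 + s22 * g2 = l * g2].
Proof.
have [bnd [g1 [g2 eig]]] := sym2_max_eigen s11 s12 s22.
set l := (_ + _) in bnd eig.
have [l_gt1|l_le1] := ltP 1 l; first by exists l, g1, g2.
have psd b1 b2 :
    0 <= b1 * ((1 - s11) * b1 + (- s12) * b2) + b2 * ((- s12) * b1 + (1 - s22) * b2).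
  have := bnd b1 b2; have : 0 <= b1 ^+ 2 + b2 ^+ 2 by rewrite addr_ge0 ?sqr_ge0.
  nra.
have ker w1 w2 : (1 - s11) * w1 + (- s12) * w2 = 0 -> (- s12) * w1 + (1 - s22) * w2 = 0 ->
    mink h f1 * w1 + mink h f2 * w2 = 0.
  move=> k1 k2; rewrite -mink_h_fperp (ultra (v := fperp w1 w2)) ?mink0r //.
  - exact: mink_perp_e1.
  - exact: mink_perp_e2.
  - by rewrite mink_fperp_f1.
  - by rewrite mink_fperp_f2.
  - by rewrite mink_fperp k1 k2 !mulr0 addr0.
have [b1 [b2 [k1 k2]]] := psd_sym2_range psd ker.
have : h - fperp b1 b2 = 0.
  apply: ultra.
  - by rewrite minkBl he1 mink_perp_e1 ?subrr.
  - by rewrite minkBl he2 mink_perp_e2 ?subrr.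
  - by rewrite minkBl mink_fperp_f1 k1 subrr.
  - by rewrite minkBl mink_fperp_f2 k2 subrr.
  rewrite minkBl !(minkBr h) (minkC (fperp _ _) h) mink_h_fperp mink_fperp hh -k1 -k2.
  by have := psd b1 b2; nra.
move/eqP; rewrite subr_eq0 => /eqP hfp.
by have := psd b1 b2; rewrite -mink_fperp -hfp hh; lra.
Qed.

Lemma halfturn_comp_axis : exists x1 x2 c1 c2, axis T x1 x2 c1 c2.
Proof.
have [l [g1 [g2 [l_gt1 [g_gt0 q1 q2]]]]] := gram_eigen_gt1.
set u := fvec g1 g2; set w := pE u.
have uw : mink u w = l * (g1 ^+ 2 + g2 ^+ 2).
  by rewrite minkC mink_proj_sym // mink_projE_fvec q1 q2; ring.
have ww : mink w w = l * (g1 ^+ 2 + g2 ^+ 2).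
  by rewrite -uw [RHS]minkC /w [RHS]mink_proj_sym.
have pFw : pF w = l *: u.
  rewrite {1}/proj mink_projE_fvec_f1 mink_projE_fvec_f2 q1 q2.
  by rewrite /u /fvec scalerDr !scalerA.
have Hu : halfturn e1 e2 u = u - 2 *: w by [].
have pFu : pF u = u by rewrite {1}/proj mink_fvec_f1 mink_fvec_f2.
have Tu : T u = 2 *: w - u.
  rewrite /halfturn_comp (halfturn_fixed_proj pFu) -scaleN1r halfturnZ Hu.
  by apply/rowP => i; rewrite !mxE; ring.
have Tw : T w = (4 * l - 1) *: w - (2 * l) *: u.
  rewrite /halfturn_comp {2}/halfturn pFw halfturnB !halfturnZ Hu.
  rewrite halfturn_fixed_proj ?projK //.
  by apply/rowP => i; rewrite !mxE; ring.
apply: (axis_of_plane halfturn_compD halfturn_compZ g_gt0 l_gt1 _ uw ww Tu Tw).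
exact: mink_fvec.
Qed.

End TwoPlanes.

Lemma halfturn_comp_hyperbolic e1 e2 f1 f2 h :
  orthonormal e1 e2 -> orthonormal f1 f2 ->
  mink h h = -1 -> mink h e1 = 0 -> mink h e2 = 0 ->
  (forall v, mink v e1 = 0 -> mink v e2 = 0 -> mink v f1 = 0 -> mink v f2 = 0 ->
     mink v v <= 0 -> v = 0) ->
  hyperbolic_isom (halfturn_comp e1 e2 f1 f2).
Proof.
move=> on_e on_f hh he1 he2 ultra.
have [x1 [x2 [c1 [c2 ax]]]] := halfturn_comp_axis on_e on_f hh he1 he2 ultra.
apply: hyperbolic_of_axis ax.
- exact: halfturn_compD.
- exact: halfturn_compZ.
- exact: halfturn_comp_iso.
- exact: halfturn_comp_no_fixpoint.
Qed.

End Minkowski.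

Unset Implicit Arguments.

Theorem lemma6p3 (R : realType) (P Q : 'rV[R]_5 -> Prop) (HP HQ : 'rV[R]_5 -> 'rV[R]_5) :
  is_plane P -> is_plane Q -> ultra_parallel P Q ->
  half_turn P HP -> half_turn Q HQ ->
  hyperbolic_isom (fun x => HP (HQ x)).
Proof.
move=> [_ [_ [_ [h Ph]]]] [_ [_ [_ [h' Qh']]]] up.
move=> /half_turnP[e1 [e2 [on_e hP HPE]]] /half_turnP[f1 [f2 [on_f hQ HQF]]].
have [[hh _] [he1 he2]] := iffLR (hP h) Ph.
have -> : (fun x => HP (HQ x)) = halfturn_comp e1 e2 f1 f2.
  by apply: boolp.funext => x; rewrite HPE HQF.
apply: halfturn_comp_hyperbolic on_e on_f hh he1 he2 _.
exact: ultra_parallel_spacelike up hP hQ Ph Qh'.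
Qed.
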